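(* Let $G:[0,\nu)\to[0,\infty)$ be strictly increasing with $G(0)=0$, twice differentiable with $G'(x)>0$ for all $x\in(0,\nu)$, and with range $[0,\infty)$. Then the function $x\mapsto G^{-1}(G(x)+G(c))$ is concave for all $c>0$ if and only if the function $u(x)=1/G'(x)$ is concave. *)

From Stdlib Require Import Reals Lra.
From Coquelicot Require Import Coquelicot.
Open Scope R_scope.

Definition dom (nu : Rbar) (x : R) : Prop := 0 <= x /\ Rbar_lt x nu.

Definition odom (nu : Rbar) (x : R) : Prop := 0 < x /\ Rbar_lt x nu.

Definition concave_on (D : R -> Prop) (f : R -> R) : Prop :=
  forall x y t, D x -> D y -> 0 <= t <= 1 ->
    t * f x + (1 - t) * f y <= f (t * x + (1 - t) * y).

From Stdlib Require Import Reals Lra Ranalysis5.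
From Coquelicot Require Import Coquelicot.
Open Scope R_scope.

(* Write F_c x = G^-1 (G x + G c) and u = 1 / G'.  By the inverse function rule
   F_c' x = G' x * u (F_c x), and differentiating again with G'' = - u' G'^2 gives
   F_c'' x = G'(x)^2 u (F_c x) (u' (F_c x) - u' x).  Since F_c x > x, and every pair
   z < y is of the form (z, F_c z) for the c with G c = G y - G z, all the F_c are
   concave on (0, nu) iff u' is nonincreasing, i.e. iff u is concave.  Concavity of
   F_c extends to [0, nu) because F_c is nondecreasing and continuous on (0, nu). *)

Definition is_interval (D : R -> Prop) : Prop :=
  forall x y z, D x -> D y -> x <= z <= y -> D z.

Lemma is_interval_odom nu : is_interval (odom nu).
Proof.
  intros x y z [Hx _] [_ Hy] Hz. split; [lra|].
  apply Rbar_le_lt_trans with (Finite y); [simpl; lra | exact Hy].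
Qed.

Lemma concave_on_subset (D D' : R -> Prop) f :
  (forall x, D x -> D' x) -> concave_on D' f -> concave_on D f.
Proof. intros HDD' Hf x y t Hx Hy Ht. apply Hf; auto. Qed.

Lemma concave_on_of_lt (D : R -> Prop) f :
  (forall x y t, D x -> D y -> x < y -> 0 <= t <= 1 ->
     t * f x + (1 - t) * f y <= f (t * x + (1 - t) * y)) ->
  concave_on D f.
Proof.
  intros Hlt x y t Hx Hy Ht.
  destruct (Rtotal_order x y) as [Hxy | [<- | Hyx]].
  - now apply Hlt.
  - replace (t * x + (1 - t) * x) with x by ring. lra.
  - specialize (Hlt y x (1 - t) Hy Hx Hyx ltac:(lra)).
    replace (t * x + (1 - t) * y) with ((1 - t) * y + (1 - (1 - t)) * x) by ring.
    lra.
Qed.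

Lemma is_derive_continuity_pt f x l : is_derive f x l -> continuity_pt f x.
Proof.
  intros Hf. apply continuity_pt_filterlim.
  exact (ex_derive_continuous f x (ex_intro _ l Hf)).
Qed.

Lemma ex_pos_lt_both a b : 0 < a -> 0 < b -> exists h, 0 < h /\ h < a /\ h < b.
Proof.
  intros Ha Hb. exists (Rmin (a / 2) (b / 2)). repeat split.
  - apply Rmin_glb_lt; lra.
  - eapply Rle_lt_trans; [apply Rmin_l | lra].
  - eapply Rle_lt_trans; [apply Rmin_r | lra].
Qed.

Lemma continuity_pt_ge_right f z A d :
  continuity_pt f z -> 0 < d -> (forall h, 0 < h < d -> A <= f (z + h)) -> A <= f z.
Proof.
  intros Hf Hd HA. apply Rnot_lt_le. intros Hlt.
  destruct (Hf (A - f z) ltac:(lra)) as [alp [Halp Hnear]].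
  destruct (ex_pos_lt_both alp d Halp Hd) as [h Hh].
  specialize (HA h ltac:(lra)).
  assert (Hclose : Rabs (f (z + h) - f z) < A - f z).
  { apply (Hnear (z + h)). unfold D_x, no_cond; simpl.
    split; [split; [easy | lra] |]. unfold R_dist.
    replace (z + h - z) with h by ring. rewrite Rabs_pos_eq; lra. }
  apply Rabs_def2 in Hclose. lra.
Qed.

Lemma is_derive_ge_right_slope g x y l S :
  is_derive g x l -> x < y ->
  (forall z, x < z < y -> S * (z - x) <= g z - g x) -> S <= l.
Proof.
  intros Hg Hxy Hslope. apply Rnot_lt_le. intros Hl.
  apply is_derive_Reals in Hg. destruct (Hg (S - l) ltac:(lra)) as [[e He] Hquot]; simpl in Hquot.
  destruct (ex_pos_lt_both e (y - x) He ltac:(lra)) as [h Hh].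
  specialize (Hquot h ltac:(lra) ltac:(rewrite Rabs_pos_eq; lra)).
  specialize (Hslope (x + h) ltac:(lra)). replace (x + h - x) with h in Hslope by ring.
  apply Rabs_def2 in Hquot.
  assert (Hq : (g (x + h) - g x) / h * h = g (x + h) - g x) by (field; lra).
  nra.
Qed.

Lemma is_derive_le_left_slope g x y l S :
  is_derive g y l -> x < y ->
  (forall z, x < z < y -> g y - g z <= S * (y - z)) -> l <= S.
Proof.
  intros Hg Hxy Hslope.
  assert (Hrefl : is_derive (fun z => g (- z)) (- y) (- l)).
  { replace (- l) with (scal (-1) l) by (unfold scal; simpl; unfold mult; simpl; ring).
    apply (is_derive_comp g Ropp). { now rewrite Ropp_involutive. }
    auto_derive; [easy | ring]. }
  enough (- S <= - l) by lra.
  apply (is_derive_ge_right_slope (fun z => g (- z)) (- y) (- x)); [exact Hrefl | lra |].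
  intros z Hz. rewrite !Ropp_involutive.
  specialize (Hslope (- z) ltac:(lra)). lra.
Qed.

Section DerivativeTests.

Variable D : R -> Prop.
Hypothesis D_interval : is_interval D.

Variables g g' : R -> R.
Hypothesis g_derive : forall x, D x -> is_derive g x (g' x).

Lemma MVT_on x y : D x -> D y -> x <= y ->
  exists c, x <= c <= y /\ g y - g x = g' c * (y - x).
Proof.
  intros Hx Hy Hxy.
  assert (HD : forall z, x <= z <= y -> D z) by (intros; now apply (D_interval x y)).
  destruct (MVT_gen g x y g') as [c [Hc Hmvt]]; rewrite Rmin_left, Rmax_right in * by lra.
  - intros z Hz. apply g_derive, HD. lra.
  - intros z Hz. apply (is_derive_continuity_pt _ _ (g' z)), g_derive, HD, Hz.
  - now exists c.
Qed.

Lemma nonincreasing_of_derive_nonpos :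
  (forall x, D x -> g' x <= 0) ->
  forall x y, D x -> D y -> x <= y -> g y <= g x.
Proof.
  intros Hneg x y Hx Hy Hxy.
  destruct (MVT_on x y Hx Hy Hxy) as [c [Hc Hmvt]].
  assert (g' c <= 0) by (apply Hneg, (D_interval x y); auto).
  nra.
Qed.

Lemma derive_nonpos_of_nonincreasing x y :
  (forall z w, D z -> D w -> z <= w -> g w <= g z) ->
  D x -> D y -> x < y -> g' x <= 0.
Proof.
  intros Hdec Hx Hy Hxy.
  enough (0 <= - g' x) by lra.
  apply (is_derive_ge_right_slope (fun z => - g z) x y).
  - apply (is_derive_opp g), g_derive, Hx.
  - exact Hxy.
  - intros z Hz.
    assert (g z <= g x) by (apply Hdec; [exact Hx | apply (D_interval x y); auto; lra | lra]).
    lra.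
Qed.

Lemma concave_on_of_derive_nonincreasing :
  (forall x y, D x -> D y -> x <= y -> g' y <= g' x) -> concave_on D g.
Proof.
  intros Hdec. apply concave_on_of_lt. intros x y t Hx Hy Hxy Ht.
  set (z := t * x + (1 - t) * y).
  assert (Hz : D z) by (apply (D_interval x y); auto; unfold z; nra).
  destruct (MVT_on x z Hx Hz ltac:(unfold z; nra)) as [c1 [Hc1 Hmvt1]].
  destruct (MVT_on z y Hz Hy ltac:(unfold z; nra)) as [c2 [Hc2 Hmvt2]].
  assert (Hc : g' c2 <= g' c1) by (apply Hdec; try lra; apply (D_interval x y); auto; lra).
  (* t g x + (1 - t) g y - g z = t (1 - t) (y - x) (g' c2 - g' c1) *)
  replace (z - x) with ((1 - t) * (y - x)) in Hmvt1 by (unfold z; ring).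
  replace (y - z) with (t * (y - x)) in Hmvt2 by (unfold z; ring).
  assert (0 <= t * (1 - t) * (y - x)) by (apply Rmult_le_pos; [apply Rmult_le_pos|]; lra).
  nra.
Qed.

Lemma derive_nonincreasing_of_concave :
  concave_on D g -> forall x y, D x -> D y -> x <= y -> g' y <= g' x.
Proof.
  intros Hconc x y Hx Hy [Hxy | <-]; [| lra].
  set (S := (g y - g x) / (y - x)).
  assert (Hchord : forall z, x < z < y -> g x + S * (z - x) <= g z).
  { intros z Hz. set (t := (y - z) / (y - x)).
    specialize (Hconc x y t Hx Hy).
    replace (t * x + (1 - t) * y) with z in Hconc by (unfold t; field; lra).
    replace (t * g x + (1 - t) * g y) with (g x + S * (z - x)) in Hconc
      by (unfold t, S; field; lra).
    apply Hconc. unfold t. split.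
    - apply Rdiv_le_0_compat; lra.
    - apply Rmult_le_reg_r with (y - x); [lra|]. field_simplify; lra. }
  assert (Hx' : S <= g' x).
  { apply (is_derive_ge_right_slope g x y); auto.
    intros z Hz. specialize (Hchord z Hz). lra. }
  assert (Hy' : g' y <= S).
  { apply (is_derive_le_left_slope g x y); auto.
    intros z Hz. specialize (Hchord z Hz).
    assert (g y = g x + S * (y - x)) by (unfold S; field; lra). lra. }
  lra.
Qed.

End DerivativeTests.

Lemma concave_on_closed_left (a : R) (b : Rbar) f :
  concave_on (fun x => a < x /\ Rbar_lt x b) f ->
  (forall x, a < x -> Rbar_lt x b -> f a <= f x) ->
  (forall x, a < x -> Rbar_lt x b -> continuity_pt f x) ->
  concave_on (fun x => a <= x /\ Rbar_lt x b) f.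
Proof.
  intros Hconc Hbase Hcont. apply concave_on_of_lt. intros x y t [Hax Hx] [Hay Hy] Hxy Ht.
  destruct Hax as [Hax | ->]; [apply Hconc; [split | split |]; auto; lra |].
  destruct (Req_dec t 0) as [-> | Ht0].
  { replace (0 * x + (1 - 0) * y) with y by ring. lra. }
  destruct (Req_dec t 1) as [-> | Ht1].
  { replace (1 * x + (1 - 1) * y) with x by ring. lra. }
  set (z := t * x + (1 - t) * y).
  assert (Hlt : forall w, x < w <= y -> Rbar_lt w b)
    by (intros; apply Rbar_le_lt_trans with (Finite y); simpl; [lra | easy]).
  (* approach the endpoint x by interior points e = x + h / t, where f x <= f e *)
  apply (continuity_pt_ge_right f z _ (t * (y - x))).
  - apply Hcont; [unfold z; nra | apply Hlt; unfold z; nra].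
  - nra.
  - intros h Hh. set (e := x + h / t).
    assert (He : x < e < y).
    { unfold e. split.
      - assert (0 < h / t) by (apply Rdiv_lt_0_compat; lra). lra.
      - assert (h / t < y - x) by (apply Rmult_lt_reg_r with t; [lra|]; field_simplify; lra). lra. }
    replace (z + h) with (t * e + (1 - t) * y) by (unfold z, e; field; lra).
    assert (f x <= f e) by (apply Hbase; [lra | apply Hlt; lra]).
    assert (t * f e + (1 - t) * f y <= f (t * e + (1 - t) * y))
      by (apply Hconc; [split; [lra | apply Hlt; lra] | split; [lra | easy] | lra]).
    nra.
Qed.

Lemma is_derive_inverse (f g df : R -> R) (p q y : R) :
  g p < g q ->
  (forall x x', g p <= x -> x < x' -> x' <= g q -> f x < f x') ->
  (forall s, p <= s <= q -> g p <= g s <= g q /\ f (g s) = s) ->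
  (forall x, g p <= x <= g q -> is_derive f x (df x)) ->
  p < y < q -> df (g y) <> 0 ->
  is_derive g y (/ df (g y)).
Proof.
  intros Hpq Hincr Hinv Hf Hy Hdf.
  assert (Hfp : f (g p) = p) by (apply Hinv; lra).
  assert (Hfq : f (g q) = q) by (apply Hinv; lra).
  assert (Hgy : g p <= g y <= g q) by (apply Hinv; lra).
  assert (Hcont : continuity_pt g y).
  { apply (continuity_pt_recip_interv f g (g p) (g q)); rewrite ?Hfp, ?Hfq; auto.
    - intros s Hs1 Hs2. unfold comp, id. apply Hinv. lra.
    - intros s Hs1 Hs2. apply Hinv. lra.
    - intros x Hx. now apply (is_derive_continuity_pt _ _ (df x)), Hf. }
  pose (Prf x (Hx : g p <= x <= g q) :=
    exist (fun l => derivable_pt_lim f x l) (df x) (proj1 (is_derive_Reals _ _ _) (Hf x Hx))).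
  pose proof (derivable_pt_lim_recip_interv f g p q y Prf Hcont ltac:(lra) Hy Hgy
    ltac:(intros s Hs; apply Hinv, Hs) Hdf) as Hg.
  apply is_derive_Reals. simpl in Hg. now rewrite <- Rdiv_1_l.
Qed.

Definition Gshift (G Ginv : R -> R) (c x : R) : R := Ginv (G x + G c).

Definition recip_Derive (G : R -> R) (x : R) : R := / Derive G x.

Definition recip_Derive' (G : R -> R) (x : R) : R := - Derive (Derive G) x / Derive G x ^ 2.

Section Shift.

Variables (nu : Rbar) (G Ginv : R -> R).
Hypothesis G_nonneg : forall x, dom nu x -> 0 <= G x.
Hypothesis G_incr : forall x y, dom nu x -> dom nu y -> x < y -> G x < G y.
Hypothesis G_0 : G 0 = 0.
Hypothesis G_derive : forall x, odom nu x -> ex_derive G x.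
Hypothesis G_derive2 : forall x, odom nu x -> ex_derive (Derive G) x.
Hypothesis G_derive_pos : forall x, odom nu x -> 0 < Derive G x.
Hypothesis Ginv_spec : forall y, 0 <= y -> dom nu (Ginv y) /\ G (Ginv y) = y.

Lemma dom_of_odom x : odom nu x -> dom nu x.
Proof. intros [Hx Hnu]. split; [lra | exact Hnu]. Qed.

Lemma lt_of_G_lt x y : dom nu x -> dom nu y -> G x < G y -> x < y.
Proof.
  intros Hx Hy HG. destruct (Rtotal_order x y) as [Hxy | [-> | Hyx]]; [easy | lra |].
  specialize (G_incr y x Hy Hx Hyx). lra.
Qed.

Lemma Ginv_G x : dom nu x -> Ginv (G x) = x.
Proof.
  intros Hx. destruct (Ginv_spec (G x) (G_nonneg x Hx)) as [Hdom HG].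
  destruct (Rtotal_order (Ginv (G x)) x) as [Hlt | [Heq | Hgt]]; [| easy |].
  - specialize (G_incr _ _ Hdom Hx Hlt). lra.
  - specialize (G_incr _ _ Hx Hdom Hgt). lra.
Qed.

Lemma Ginv_le p q : 0 <= p -> p <= q -> Ginv p <= Ginv q.
Proof.
  intros Hp Hpq. destruct (Ginv_spec p Hp) as [Hdp HGp].
  destruct (Ginv_spec q ltac:(lra)) as [Hdq HGq].
  apply Rnot_lt_le. intros Hlt. specialize (G_incr _ _ Hdq Hdp Hlt). lra.
Qed.

Lemma G_pos x : odom nu x -> 0 < G x.
Proof.
  intros Hx. rewrite <- G_0. apply G_incr; [| now apply dom_of_odom | apply Hx].
  destruct Hx as [Hx Hnu]. split; [lra |].
  apply Rbar_le_lt_trans with (Finite x); [simpl; lra | exact Hnu].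
Qed.

Lemma odom_Ginv s : 0 < s -> odom nu (Ginv s).
Proof.
  intros Hs. destruct (Ginv_spec s ltac:(lra)) as [[[Hpos | Hzero] Hnu] HG].
  - now split.
  - rewrite <- Hzero, G_0 in HG. lra.
Qed.

Lemma is_derive_G x : odom nu x -> is_derive G x (Derive G x).
Proof. intros Hx. now apply Derive_correct, G_derive. Qed.

Lemma is_derive_Ginv s : 0 < s -> is_derive Ginv s (recip_Derive G (Ginv s)).
Proof.
  intros Hs.
  assert (Hlo : odom nu (Ginv (s / 2))) by (apply odom_Ginv; lra).
  assert (Hhi : odom nu (Ginv (s + 1))) by (apply odom_Ginv; lra).
  assert (Hin : forall x, Ginv (s / 2) <= x <= Ginv (s + 1) -> odom nu x)
    by (intros x Hx; apply (is_interval_odom nu (Ginv (s / 2)) (Ginv (s + 1))); auto).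
  apply (is_derive_inverse G Ginv (Derive G) (s / 2) (s + 1)).
  - apply lt_of_G_lt; try now apply dom_of_odom.
    rewrite (proj2 (Ginv_spec (s / 2) ltac:(lra))), (proj2 (Ginv_spec (s + 1) ltac:(lra))). lra.
  - intros x x' Hx Hxx' Hx'. apply G_incr; try lra; apply dom_of_odom, Hin; lra.
  - intros s' Hs'. split; [split; apply Ginv_le; lra | apply Ginv_spec; lra].
  - intros x Hx. apply is_derive_G, Hin, Hx.
  - lra.
  - apply Rgt_not_eq, G_derive_pos, odom_Ginv. lra.
Qed.

Lemma is_derive_recip_Derive x :
  odom nu x -> is_derive (recip_Derive G) x (recip_Derive' G x).
Proof.
  intros Hx. apply is_derive_inv.
  - now apply Derive_correct, G_derive2.
  - now apply Rgt_not_eq, G_derive_pos.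
Qed.

Lemma G_Gshift_pos c x : odom nu c -> odom nu x -> 0 < G x + G c.
Proof. intros Hc Hx. pose proof (G_pos c Hc). pose proof (G_pos x Hx). lra. Qed.

Lemma odom_Gshift c x : odom nu c -> odom nu x -> odom nu (Gshift G Ginv c x).
Proof. intros Hc Hx. now apply odom_Ginv, G_Gshift_pos. Qed.

Lemma lt_Gshift c x : odom nu c -> odom nu x -> x < Gshift G Ginv c x.
Proof.
  intros Hc Hx. apply lt_of_G_lt; [now apply dom_of_odom | now apply dom_of_odom, odom_Gshift |].
  unfold Gshift. rewrite (proj2 (Ginv_spec _ (Rlt_le _ _ (G_Gshift_pos c x Hc Hx)))).
  pose proof (G_pos c Hc). lra.
Qed.

Lemma is_derive_Gshift c : odom nu c -> forall x, odom nu x ->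
  is_derive (Gshift G Ginv c) x (Derive G x * recip_Derive G (Gshift G Ginv c x)).
Proof.
  intros Hc x Hx.
  apply (is_derive_comp Ginv (fun y => G y + G c)).
  - now apply is_derive_Ginv, G_Gshift_pos.
  - rewrite <- (Rplus_0_r (Derive G x)).
    apply (is_derive_plus G (fun _ => G c)); [now apply is_derive_G | exact (is_derive_const (G c) x)].
Qed.

Lemma is_derive2_Gshift c : odom nu c -> forall x, odom nu x ->
  is_derive (fun y => Derive G y * recip_Derive G (Gshift G Ginv c y)) x
    (Derive G x ^ 2 * recip_Derive G (Gshift G Ginv c x)
       * (recip_Derive' G (Gshift G Ginv c x) - recip_Derive' G x)).
Proof.
  intros Hc x Hx. set (F := Gshift G Ginv c).
  assert (HuF : is_derive (fun y => recip_Derive G (F y)) x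
                  (Derive G x * recip_Derive G (F x) * recip_Derive' G (F x))).
  { apply (is_derive_comp (recip_Derive G) F).
    - now apply is_derive_recip_Derive, odom_Gshift.
    - now apply is_derive_Gshift. }
  pose proof (is_derive_mult (Derive G) _ x _ _ (Derive_correct _ _ (G_derive2 x Hx)) HuF
                (fun _ _ => Rmult_comm _ _)) as H.
  assert (Hd : Derive G x <> 0) by now apply Rgt_not_eq, G_derive_pos.
  unfold recip_Derive, recip_Derive' in *. simpl in H. unfold plus, mult in H; simpl in H.
  replace (Derive G x ^ 2 * / Derive G (F x) * (- Derive (Derive G) (F x) / Derive G (F x) ^ 2
             - - Derive (Derive G) x / Derive G x ^ 2))
    with (Derive (Derive G) x * / Derive G (F x)
          + Derive G x * (Derive G x * / Derive G (F x) * (- Derive (Derive G) (F x) / Derive G (F x) ^ 2)))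
    by (field; split; [exact Hd | now apply Rgt_not_eq, G_derive_pos, odom_Gshift]).
  exact H.
Qed.

Lemma concave_recip_Derive_of_concave_Gshift :
  (forall c, odom nu c -> concave_on (dom nu) (Gshift G Ginv c)) ->
  concave_on (odom nu) (recip_Derive G).
Proof.
  intros Hshift. apply (concave_on_of_derive_nonincreasing _ (is_interval_odom nu) _ _ is_derive_recip_Derive).
  intros z y Hz Hy [Hzy | <-]; [| lra].
  set (c := Ginv (G y - G z)).
  assert (HGzy : 0 < G y - G z)
    by (pose proof (G_incr z y (dom_of_odom z Hz) (dom_of_odom y Hy) Hzy); lra).
  assert (Hc : odom nu c) by (apply odom_Ginv; lra).
  assert (Hcz : Gshift G Ginv c z = y).
  { unfold Gshift, c. rewrite (proj2 (Ginv_spec _ (Rlt_le _ _ HGzy))).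
    replace (G z + (G y - G z)) with (G y) by ring.
    now apply Ginv_G, dom_of_odom. }
  assert (Hconc : concave_on (odom nu) (Gshift G Ginv c))
    by exact (concave_on_subset _ _ _ dom_of_odom (Hshift c Hc)).
  pose proof (derive_nonincreasing_of_concave _ _ _
                (is_derive_Gshift c Hc) Hconc) as HF'dec.
  pose proof (derive_nonpos_of_nonincreasing _ (is_interval_odom nu) _ _
                (is_derive2_Gshift c Hc) z y HF'dec Hz Hy Hzy) as Hsign.
  cbv beta in Hsign. rewrite Hcz in Hsign.
  assert (0 < Derive G z ^ 2 * recip_Derive G y).
  { apply Rmult_lt_0_compat; [apply pow_lt | apply Rinv_0_lt_compat]; now apply G_derive_pos. }
  nra.
Qed.

Lemma concave_Gshift_of_concave_recip_Derive c :
  concave_on (odom nu) (recip_Derive G) -> odom nu c ->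
  concave_on (dom nu) (Gshift G Ginv c).
Proof.
  intros Hconc Hc.
  pose proof (derive_nonincreasing_of_concave _ _ _
                is_derive_recip_Derive Hconc) as Hu'dec.
  assert (HF'nonpos : forall x, odom nu x ->
    Derive G x ^ 2 * recip_Derive G (Gshift G Ginv c x)
      * (recip_Derive' G (Gshift G Ginv c x) - recip_Derive' G x) <= 0).
  { intros x Hx.
    assert (HFx : odom nu (Gshift G Ginv c x)) by now apply odom_Gshift.
    pose proof (Hu'dec x _ Hx HFx (Rlt_le _ _ (lt_Gshift c x Hc Hx))).
    assert (0 < Derive G x ^ 2 * recip_Derive G (Gshift G Ginv c x)).
    { apply Rmult_lt_0_compat; [apply pow_lt | apply Rinv_0_lt_compat]; now apply G_derive_pos. }
    nra. }
  pose proof (nonincreasing_of_derive_nonpos _ (is_interval_odom nu) _ _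
                (is_derive2_Gshift c Hc) HF'nonpos) as HF'dec.
  apply concave_on_closed_left.
  - exact (concave_on_of_derive_nonincreasing _ (is_interval_odom nu) _ _
             (is_derive_Gshift c Hc) HF'dec).
  - intros x Hx Hxnu. unfold Gshift. apply Ginv_le; rewrite G_0.
    + pose proof (G_pos c Hc). lra.
    + pose proof (G_pos x (conj Hx Hxnu)). lra.
  - intros x Hx Hxnu. exact (is_derive_continuity_pt _ _ _ (is_derive_Gshift c Hc x (conj Hx Hxnu))).
Qed.

End Shift.

Theorem lemma6 (nu : Rbar) (G Ginv : R -> R)
  (Hnu : Rbar_lt 0 nu)
  (Hmaps : forall x, dom nu x -> 0 <= G x)
  (Hincr : forall x y, dom nu x -> dom nu y -> x < y -> G x < G y)
  (HG0 : G 0 = 0)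
  (Hd1 : forall x, odom nu x -> ex_derive G x)
  (Hd2 : forall x, odom nu x -> ex_derive (Derive G) x)
  (Hpos : forall x, odom nu x -> 0 < Derive G x)
  (Hrange : forall y, 0 <= y -> exists x, dom nu x /\ G x = y)
  (HGinv : forall y, 0 <= y -> dom nu (Ginv y) /\ G (Ginv y) = y) :
  (forall c, odom nu c -> concave_on (dom nu) (fun x => Ginv (G x + G c)))
  <-> concave_on (odom nu) (fun x => / Derive G x).
Proof.
  split.
  - intros Hshift.
    exact (concave_recip_Derive_of_concave_Gshift nu G Ginv Hmaps Hincr HG0 Hd1 Hd2 Hpos HGinv Hshift).
  - intros Hconc c.
    exact (concave_Gshift_of_concave_recip_Derive nu G Ginv Hincr HG0 Hd1 Hd2 Hpos HGinv c Hconc).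
Qed.
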